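(* Let $\phi:\mathbb{R}_+\to\mathbb{R}_+$ be non-negative continuous, $d\nu=\phi(r)\,dr$, and let $I,J,K,L$ be non-negative functions on $\mathbb{R}_+$ such that $I(ab)\le bJ(a)+K(aL(b))$ for all $a,b\ge0$, $J$ is a lower isoperimetric function for $\nu$, $K$ is non-decreasing and concave, and $L$ is concave. Then for every elementary step function $f=b\mathbf{1}_{[r,s)}$ with $b\ge0$ and $0\le r<s$, $$I\Big(\int_{\mathbb{R}_+}f\,d\nu\Big)\le K\Big(\int_{\mathbb{R}_+}L(f)\,d\nu\Big)+V_\nu(f).$$
   Context: $\mathbb{R}_+=[0,\infty)$. For Borel $A\subset\mathbb{R}_+$, $\nu^+(A)=\liminf_{r\to0^+}\frac{\nu(A^r)-\nu(A)}{r}$ with $A^r=\{x\in\mathbb{R}_+:\operatorname{dist}(x,A)<r\}$; $J$ is a lower isoperimetric function for $\nu$ if $\nu^+(A)\ge J(\nu(A))$ for all Borel $A$. For a real function $f$ on $\mathbb{R}_+$ with bounded support, the weighted total variation is $V_\nu(f)=\sup\sum_{k=1}^{m}|f(\xi_k)-f(\xi_{k-1})|\,\phi(\xi_{k-1})$, the supremum over all $m\in\mathbb{N}$ and all finite increasing sequences $\xi_0<\xi_1<\dots<\xi_m$ of non-negative reals with $\operatorname{supp}f\subset[\xi_0,\xi_m]$. *)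

From HB Require Import structures.
From mathcomp Require Import all_boot all_order all_algebra.
From mathcomp Require Import all_classical all_reals all_analysis.
Set Implicit Arguments. Unset Strict Implicit. Unset Printing Implicit Defensive.
Import Order.TTheory GRing.Theory Num.Theory.
Import numFieldNormedType.Exports.
Local Open Scope classical_set_scope.
Local Open Scope ring_scope.

Section Defs.
Variable R : realType.

Definition Rplus : set R := `[0, +oo[%classic.

Definition nu (phi : R -> R) (A : set R) : \bar R :=
  (\int[@lebesgue_measure R]_(x in A) (phi x)%:E)%E.

Definition enlarge (A : set R) (r : R) : set R :=
  [set x | 0 <= x /\ exists2 a, A a & `|x - a| < r].

(* nu^+(A) = liminf_{r -> 0+} (nu(A^r) - nu(A)) / r, written out as
   sup_{d > 0} inf_{0 < r < d} *)
Definition nu_plus (phi : R -> R) (A : set R) : \bar R :=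
  ereal_sup [set ereal_inf [set ((nu phi (enlarge A r) - nu phi A)
                                  * (r^-1)%:E)%E | r in `]0, d[%classic]
            | d in `]0, +oo[%classic].

(* J is a lower isoperimetric function for nu: nu^+(A) >= J(nu(A)) for
   every Borel A of R_+ (of finite nu-measure, so that J(nu(A)) makes sense) *)
Definition lower_isoperimetric (phi J : R -> R) : Prop :=
  forall A : set R, measurable A -> A `<=` Rplus ->
    (nu phi A < +oo)%E -> ((J (fine (nu phi A)))%:E <= nu_plus phi A)%E.

Definition nondecreasing_on_Rplus (K : R -> R) : Prop :=
  forall x y, 0 <= x -> x <= y -> K x <= K y.

Definition concave_on_Rplus (K : R -> R) : Prop :=
  forall x y t, 0 <= x -> 0 <= y -> 0 <= t <= 1 ->
    t * K x + (1 - t) * K y <= K (t * x + (1 - t) * y).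

Definition supp (f : R -> R) : set R := closure [set x | f x != 0].

Definition admissible (f : R -> R) (m : nat) (xi : nat -> R) : Prop :=
  (0 < m)%N /\ 0 <= xi 0%N /\ (forall k, (k < m)%N -> xi k < xi k.+1) /\
  supp f `<=` `[xi 0%N, xi m]%classic.

Definition Vnu (phi f : R -> R) : \bar R :=
  ereal_sup [set v | exists m (xi : nat -> R), admissible f m xi /\
     v = (\sum_(1 <= k < m.+1) `|f (xi k) - f (xi k.-1)| * phi (xi k.-1))%:E].

Definition Kext (K : R -> R) (x : \bar R) : \bar R :=
  match x with
  | x%:E => (K x)%:E
  | +oo%E => ereal_sup [set (K y)%:E | y in Rplus]
  | -oo%E => (K 0)%:E
  end.

Definition step (b r s : R) (x : R) : R := if (r <= x) && (x < s) then b else 0.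

End Defs.
Arguments Rplus {R}.

From HB Require Import structures.
From mathcomp Require Import all_boot all_order all_algebra.
From mathcomp Require Import all_classical all_reals all_analysis.
From mathcomp Require Import measurable_realfun lra.
Set Implicit Arguments. Unset Strict Implicit. Unset Printing Implicit Defensive.
Import Order.TTheory GRing.Theory Num.Theory.
Import numFieldNormedType.Exports.
Local Open Scope classical_set_scope.
Local Open Scope ring_scope.

(* Put A = [r, s), a = nu(A) and p = phi(r) 1_{r > 0} + phi(s), the nu-perimeter
   of A.  Then int f dnu = a b and int L(f) dnu >= a L(b), so the hypothesis on
   (I, J, K, L) at (a, b) and the monotonicity of K reduce the claim to
   b J(a) <= V_nu(f).  By continuity of phi, the enlargement A^h exceeds A by
   two collars of nu-measure (phi(r) 1_{r > 0} + phi(s) + o(1)) h, whence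
   J(a) <= nu^+(A) <= p. *)

(* The nu-perimeter of [r, s) relative to R_+: for r = 0 the left endpoint is
   not a boundary point of [r, s) in R_+ and carries no weight. *)
Definition co_perimeter (R : realType) (phi : R -> R) (r s : R) : R :=
  (if 0 < r then phi r else 0) + phi s.

Section Preliminaries.
Variable R : realType.

Lemma RplusE (x : R) : Rplus x <-> 0 <= x.
Proof. by rewrite /Rplus /= in_itv /= andbT. Qed.

Lemma measurable_Rplus : measurable (@Rplus R).
Proof. exact: measurable_itv. Qed.

Lemma within_continuous_dist (D : set R) (f : R -> R) x e :
  {within D, continuous f} -> D x -> 0 < e ->
  exists2 d, 0 < d & forall y, D y -> `|x - y| < d -> `|f x - f y| < e.
Proof.
move=> /subspace_continuousP f_cont Dx e_gt0.
have /cvgrPdist_lt /(_ e e_gt0) := f_cont x Dx.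
rewrite near_withinE => /nbhs_ballP [d /= d_gt0 hd]; exists d => // y Dy xy.
by apply: hd => //; rewrite -ball_normE.
Qed.

Lemma measurable_enlarge (A : set R) h : measurable (enlarge A h).
Proof.
have -> : enlarge A h = Rplus `&` \bigcup_(a in A) ball a h.
  apply/seteqP; split => x /=.
  - move=> [x_ge0 [a Aa xa]]; split; first exact/RplusE.
    by exists a => //; rewrite -ball_normE /= distrC.
  - move=> [/RplusE x_ge0 [a Aa]]; rewrite -ball_normE /= => xa; split => //.
    by exists a => //; rewrite distrC.
apply: measurableI; first exact: measurable_Rplus.
by apply: open_measurable; apply: bigcup_open => a _; exact: ball_open.
Qed.

Lemma Kext_ge (K : R -> R) x y : nondecreasing_on_Rplus K -> 0 <= x ->
  (x%:E <= y)%E -> ((K x)%:E <= Kext K y)%E.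
Proof.
move=> K_mono x_ge0; case: y => [y| |] /=.
- by rewrite !lee_fin; exact: K_mono.
- by move=> _; apply: ereal_sup_ubound; exists x => //; exact/RplusE.
- by rewrite leeNy_eq.
Qed.

Lemma step_in (b r s x : R) : r <= x -> x < s -> step b r s x = b.
Proof. by move=> rx xs; rewrite /step rx xs. Qed.

Lemma step_out (b r s x : R) : ~~ (r <= x < s) -> step b r s x = 0.
Proof. by rewrite /step => /negbTE ->. Qed.

Lemma step_ge0 (b r s x : R) : 0 <= b -> 0 <= step b r s x.
Proof. by rewrite /step; case: ifP. Qed.

Lemma comp_stepE (g : R -> R) (b r s : R) :
  g \o step b r s = fun x => g 0 + (g b - g 0) * \1_(`[r, s[) x.
Proof.
apply/funext => x /=; rewrite indicE /step; case: ifP => rxs.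
  by rewrite mem_set ?mulr1 ?subrKC //= in_itv /= rxs.
by rewrite memNset ?mulr0 ?addr0 //= in_itv /= rxs.
Qed.

Lemma supp_step (b r s : R) : r <= s -> supp (step b r s) `<=` `[r, s].
Proof.
move=> rs; rewrite /supp.
have -> : `[r, s]%classic = closure `[r, s]%classic.
  by apply/closure_id; exact: interval_closed.
apply: closureS => x /=; rewrite /step in_itv /=.
by case: ifP => [/andP[-> /ltW ->]|] //; rewrite eqxx.
Qed.

End Preliminaries.

Section Density.
Variables (R : realType) (phi : R -> R).
Hypothesis phi_ge0 : forall x, 0 <= x -> 0 <= phi x.
Hypothesis phi_cont : {within Rplus, continuous phi}.

Lemma measurable_phi : measurable_fun Rplus phi.
Proof. by apply: subspace_continuous_measurable_fun => //; exact: measurable_Rplus. Qed.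

Lemma measurable_EFin_phi (X : set R) : measurable X -> X `<=` Rplus ->
  measurable_fun X (fun x => (phi x)%:E).
Proof.
move=> mX XR; apply/measurable_EFinP.
by apply: (measurable_funS _ XR measurable_phi); exact: measurable_Rplus.
Qed.

Lemma phi_ge0_on (X : set R) : X `<=` Rplus -> forall x, X x -> (0 <= (phi x)%:E)%E.
Proof. by move=> XR x /XR /RplusE x_ge0; rewrite lee_fin phi_ge0. Qed.

Lemma nu_ge0 (X : set R) : X `<=` Rplus -> (0 <= nu phi X)%E.
Proof. by move=> XR; apply: integral_ge0; exact: phi_ge0_on. Qed.

Lemma le_nu (X Y : set R) : measurable X -> measurable Y -> Y `<=` Rplus ->
  X `<=` Y -> (nu phi X <= nu phi Y)%E.
Proof.
move=> mX mY YR.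
exact: (ge0_subset_integral lebesgue_measure mX mY (measurable_EFin_phi mY YR)
  (phi_ge0_on YR)).
Qed.

Lemma nu_setU (X Y : set R) : measurable X -> measurable Y ->
  X `|` Y `<=` Rplus -> [disjoint X & Y] -> nu phi (X `|` Y) = (nu phi X + nu phi Y)%E.
Proof.
move=> mX mY XYR.
have mXY : measurable (X `|` Y) by exact: measurableU.
exact: (ge0_integral_setU lebesgue_measure mX mY (measurable_EFin_phi mXY XYR)
  (phi_ge0_on XYR)).
Qed.

Lemma nu_le_mul (X : set R) (M c : R) : measurable X -> X `<=` Rplus -> 0 <= M ->
  (forall x, X x -> phi x <= M) -> (lebesgue_measure X <= c%:E)%E ->
  (nu phi X <= (M * c)%:E)%E.
Proof.
move=> mX XR M_ge0 phiM Xc; rewrite /nu.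
apply: (@le_trans _ _ (\int[lebesgue_measure]_(x in X) (cst M%:E) x)%E).
  have phi_le_M x : X x -> ((phi x)%:E <= cst M%:E x)%E by move/phiM.
  exact: (ge0_le_integral lebesgue_measure mX (phi_ge0_on XR)
           (measurable_EFin_phi mX XR) (measurable_cst _) phi_le_M).
by rewrite integral_cst // EFinM; apply: lee_pmul.
Qed.

Lemma nu_plus_le (A : set R) (c : R) : nu phi A \is a fin_num ->
  (exists2 d0, 0 < d0 & forall h, 0 < h < d0 ->
     (nu phi (enlarge A h) <= nu phi A + (c * h)%:E)%E) ->
  (nu_plus phi A <= c%:E)%E.
Proof.
move=> finA [d0 d0_gt0 growth].
apply: ge_ereal_sup => y [d /=]; rewrite in_itv /= andbT => d_gt0 <-.
set m := Num.min d d0.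
have m_gt0 : 0 < m by rewrite lt_min d_gt0.
have [md md0] : m <= d /\ m <= d0 by rewrite !ge_min !lexx /= orbT.
set h := m / 2.
have h_gt0 : 0 < h by rewrite divr_gt0.
have h_lt : h < d /\ h < d0 by rewrite /h; split; lra.
apply: ereal_inf_le; exists ((nu phi (enlarge A h) - nu phi A) * (h^-1)%:E)%E.
  by exists h => //; rewrite /= in_itv /= h_gt0; case: h_lt => ->.
rewrite lee_pdivrMr // leeBlDr // addeC; apply: growth.
by rewrite h_gt0; case: h_lt.
Qed.

Lemma Vnu_ge_sum (f : R -> R) m (xi : nat -> R) : admissible f m xi ->
  ((\sum_(1 <= k < m.+1) `|f (xi k) - f (xi k.-1)| * phi (xi k.-1))%:E
     <= Vnu phi f)%E.
Proof. by move=> adm; apply: ereal_sup_ubound; exists m, xi. Qed.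

Lemma phi_approx_left (a x e : R) : 0 <= a -> a < x -> 0 < e ->
  exists2 y, a < y < x & phi x - e <= phi y.
Proof.
move=> a_ge0 ax e_gt0.
have x_ge0 : Rplus x by apply/RplusE; lra.
have [d d_gt0 hd] := within_continuous_dist phi_cont x_ge0 e_gt0.
set y := x - Num.min (x - a) d / 2.
have m_gt0 : 0 < Num.min (x - a) d by rewrite lt_min d_gt0 subr_gt0 ax.
have [mxa md] : Num.min (x - a) d <= x - a /\ Num.min (x - a) d <= d.
  by rewrite !ge_min !lexx orbT.
exists y; first by apply/andP; split; rewrite /y; lra.
have yR : Rplus y by apply/RplusE; rewrite /y; lra.
have xy : `|x - y| < d by rewrite /y opprB addrC subrK ger0_norm; lra.
exact/ltW/ltr_distlBl/(hd y yR xy).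
Qed.

Section Interval.
Variables r s : R.
Hypotheses (r_ge0 : 0 <= r) (lt_rs : r < s).

Local Notation A := (`[r, s[%classic : set R).

Let s_ge0 : 0 <= s. Proof. exact: le_trans r_ge0 (ltW lt_rs). Qed.

Lemma co_sub_Rplus : A `<=` Rplus.
Proof.
by move=> x; rewrite /= in_itv /= => /andP[rx _]; apply/RplusE/(le_trans r_ge0).
Qed.

Lemma nu_co_fin_num : nu phi A \is a fin_num.
Proof.
have rsR : `[r, s] `<=` Rplus.
  by move=> x; rewrite /= in_itv /= => /andP[rx _]; apply/RplusE/(le_trans r_ge0).
have [c c_in phi_max] := EVT_max (ltW lt_rs) (continuous_subspaceW rsR phi_cont).
have phic_ge0 : 0 <= phi c by apply/phi_ge0/RplusE/rsR.
rewrite ge0_fin_numE ?(nu_ge0 co_sub_Rplus) //.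
apply: (@le_lt_trans _ _ (phi c * (s - r))%:E); last exact: ltry.
apply: nu_le_mul; [exact: measurable_itv | exact: co_sub_Rplus | exact: phic_ge0 | |].
- move=> x; rewrite /= in_itv /= => /andP[rx xs].
  by apply: phi_max; rewrite in_itv /= rx ltW.
- by rewrite lebesgue_measure_itv /= lte_fin lt_rs -EFinD.
Qed.

Lemma enlarge_co_subset h :
  enlarge A h `<=` (Rplus `&` `]r - h, r[) `|` A `|` `[s, s + h[.
Proof.
move=> x [x_ge0 [y]]; rewrite /= in_itv /= => /andP[ry ys].
rewrite ltr_norml => /andP[hxy xyh]; rewrite /= !in_itv /=.
case: (ltP x r) => xr; first by left; left; split; [exact/RplusE | lra].
by case: (ltP x s) => xs; [left; right | right; lra].
Qed.

Lemma nu_enlarge_co_le h : 0 < h ->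
  (nu phi (enlarge A h)
     <= nu phi (Rplus `&` `](r - h)%R, r[) + nu phi A + nu phi `[s, (s + h)%R[)%E.
Proof.
move=> h_gt0.
set Lc := Rplus `&` `]r - h, r[%classic; set Rc := `[s, s + h[%classic.
have mLc : measurable Lc.
  by apply: measurableI; [exact: measurable_Rplus | exact: measurable_itv].
have mA : measurable A by exact: measurable_itv.
have mRc : measurable Rc by exact: measurable_itv.
have LAR : Lc `|` A `<=` Rplus by move=> x [[]|/co_sub_Rplus].
have LARR : Lc `|` A `|` Rc `<=` Rplus.
  move=> x [/LAR //|]; rewrite /Rc /= in_itv /= => /andP[sx _].
  exact/RplusE/(le_trans s_ge0 sx).
have LA_disj : [disjoint Lc & A].
  apply/disj_setPS => x [[_]]; rewrite /Lc /= !in_itv /=.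
  by move=> /andP[_ xr] /andP[rx _]; lra.
have LAR_disj : [disjoint Lc `|` A & Rc].
  apply/disj_setPS => x [LAx]; rewrite /Rc /= in_itv /= => /andP[sx _].
  case: LAx => [[_]|]; rewrite /Lc /= in_itv /= => /andP[_ xs].
  - by have := lt_le_trans (lt_trans xs lt_rs) sx; rewrite ltxx.
  - by have := lt_le_trans xs sx; rewrite ltxx.
have mLA : measurable (Lc `|` A) by exact: measurableU.
have mLAR : measurable (Lc `|` A `|` Rc) by exact: measurableU.
rewrite -(nu_setU mLc mA LAR LA_disj) -(nu_setU mLA mRc LARR LAR_disj).
exact: le_nu (measurable_enlarge _ _) mLAR LARR (@enlarge_co_subset h).
Qed.

Lemma nu_left_collar_le e : 0 < e -> exists2 d, 0 < d & forall h, 0 < h < d ->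
  (nu phi (Rplus `&` `](r - h)%R, r[)
     <= (((if 0 < r then phi r else 0) + e) * h)%:E)%E.
Proof.
move=> e_gt0; have rR : Rplus r by exact/RplusE.
have [d d_gt0 phi_near] := within_continuous_dist phi_cont rR e_gt0.
exists d => // h /andP[h_gt0 hd].
apply: nu_le_mul.
- by apply: measurableI; [exact: measurable_Rplus | exact: measurable_itv].
- by move=> x [].
- by case: ifP => _; [have := phi_ge0 r_ge0 |]; lra.
- move=> x [xR]; rewrite /= in_itv /= => /andP[hx xr].
  have x_ge0 : 0 <= x by exact/RplusE.
  have -> : 0 < r by lra.
  have rx : `|r - x| < d by rewrite ger0_norm; lra.
  exact/ltW/ltr_distlCDr/(phi_near x xR rx).
- apply: (@le_trans _ _ (lebesgue_measure (`](r - h), r[%classic : set R))).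
    apply: le_measure => //; rewrite inE; last exact: measurable_itv.
    by apply: measurableI; [exact: measurable_Rplus | exact: measurable_itv].
  by rewrite lebesgue_measure_itv /= lte_fin gtrBl h_gt0 -EFinD opprB addrC subrK.
Qed.

Lemma nu_right_collar_le e : 0 < e -> exists2 d, 0 < d & forall h, 0 < h < d ->
  (nu phi `[s, (s + h)%R[ <= ((phi s + e) * h)%:E)%E.
Proof.
move=> e_gt0; have sR : Rplus s by exact/RplusE.
have [d d_gt0 phi_near] := within_continuous_dist phi_cont sR e_gt0.
exists d => // h /andP[h_gt0 hd].
have sh_sub : `[s, s + h[ `<=` Rplus.
  by move=> x; rewrite /= in_itv /= => /andP[sx _]; exact/RplusE/(le_trans s_ge0 sx).
apply: nu_le_mul; [exact: measurable_itv | exact: sh_sub | | |].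
- by have := phi_ge0 s_ge0; lra.
- move=> x /[dup] /sh_sub xR; rewrite /= in_itv /= => /andP[sx xsh].
  have sx_d : `|s - x| < d by rewrite ler0_norm; lra.
  exact/ltW/ltr_distlCDr/(phi_near x xR sx_d).
- by rewrite lebesgue_measure_itv /= lte_fin ltrDl h_gt0 -EFinD addrAC subrr add0r.
Qed.

Lemma nu_enlarge_co_growth e : 0 < e -> exists2 d0, 0 < d0 & forall h, 0 < h < d0 ->
  (nu phi (enlarge A h) <= nu phi A + ((co_perimeter phi r s + e) * h)%:E)%E.
Proof.
move=> e_gt0; have e2_gt0 : 0 < e / 2 by rewrite divr_gt0.
have [dl dl_gt0 left_collar] := nu_left_collar_le e2_gt0.
have [dr dr_gt0 right_collar] := nu_right_collar_le e2_gt0.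
exists (Num.min dl dr) => [|h]; first by rewrite lt_min dl_gt0.
rewrite lt_min => /andP[h_gt0 /andP[hl hr]].
have /fineK nuA := nu_co_fin_num.
apply: le_trans (nu_enlarge_co_le h_gt0) _.
apply: le_trans (leeD (leeD (left_collar h _) (lexx _)) (right_collar h _)) _.
- by rewrite h_gt0.
- by rewrite h_gt0.
rewrite -nuA -!EFinD lee_fin /co_perimeter; lra.
Qed.

Lemma nu_plus_co_le : (nu_plus phi A <= (co_perimeter phi r s)%:E)%E.
Proof.
apply/lee_addgt0Pr => e e_gt0; rewrite -EFinD.
exact: nu_plus_le nu_co_fin_num (nu_enlarge_co_growth e_gt0).
Qed.

Lemma admissible_step b m (xi : nat -> R) : (0 < m)%N -> 0 <= xi 0%N ->
  (forall k, (k < m)%N -> xi k < xi k.+1) -> xi 0%N <= r -> s <= xi m ->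
  admissible (step b r s) m xi.
Proof.
move=> m_gt0 xi0_ge0 xi_incr xi0r sxim; do 3!split => //.
apply: (subset_trans (supp_step (ltW lt_rs))).
by apply: subset_itv; rewrite bnd_simp.
Qed.

Section Step.
Variable b : R.
Hypothesis b_ge0 : 0 <= b.

Lemma integral_co_comp_step (g : R -> R) : 0 <= g b ->
  (\int[lebesgue_measure]_(x in A) (g (step b r s x) * phi x)%:E
     = (g b)%:E * nu phi A)%E.
Proof.
move=> gb_ge0; rewrite /nu.
rewrite -(ge0_integralZl lebesgue_measure (measurable_itv _)
  (measurable_EFin_phi (measurable_itv _) co_sub_Rplus) (phi_ge0_on co_sub_Rplus))
  ?lee_fin //.
apply: eq_integral => x /set_mem; rewrite /= in_itv /= => /andP[rx xs].
by rewrite step_in // EFinM.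
Qed.

Lemma integral_step_phi :
  (\int[lebesgue_measure]_(x in Rplus) (step b r s x * phi x)%:E = b%:E * nu phi A)%E.
Proof.
rewrite -(@integral_co_comp_step id) //=.
rewrite [LHS]integral_mkcond [RHS]integral_mkcond; apply: eq_integral => x _.
rewrite /patch; case: (boolP (x \in A)) => xA.
  by rewrite mem_set //; exact/co_sub_Rplus/set_mem.
rewrite step_out ?mul0r; first by case: ifP.
by apply: contra xA => xrs; apply: mem_set; rewrite /= in_itv.
Qed.

Lemma integral_comp_step_ge (g : R -> R) : (forall x, 0 <= x -> 0 <= g x) ->
  ((g b)%:E * nu phi A
     <= \int[lebesgue_measure]_(x in Rplus) (g (step b r s x) * phi x)%:E)%E.
Proof.
move=> g_ge0; rewrite -integral_co_comp_step ?g_ge0 //.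
have mgphi : measurable_fun Rplus (fun x => (g (step b r s x) * phi x)%:E).
  apply/measurable_EFinP.
  have -> : (fun x => g (step b r s x) * phi x) = (g \o step b r s) \* phi by [].
  rewrite comp_stepE; apply: measurable_funM measurable_phi.
  apply: measurable_funD; first exact: measurable_cst.
  apply: measurable_funM; first exact: measurable_cst.
  exact: measurable_indic (measurable_itv _).
apply: (ge0_subset_integral lebesgue_measure);
  [exact: measurable_itv | exact: measurable_Rplus | exact: mgphi | |
   exact: co_sub_Rplus].
by move=> x /RplusE x_ge0; rewrite lee_fin mulr_ge0 ?phi_ge0 ?g_ge0 ?step_ge0.
Qed.

Lemma Vnu_step_ge_right t : r < t -> t < s ->
  ((b * phi t)%:E <= Vnu phi (step b r s))%E.
Proof.
move=> rt ts.
pose xi k := match k with 0%N => r | 1%N => t | _ => s end.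
have adm : admissible (step b r s) 2 xi.
  by apply: admissible_step => //= -[|[|]] //= _; lra.
apply: le_trans (Vnu_ge_sum adm); rewrite big_ltn // big_ltn // big_geq //= lee_fin.
rewrite (step_in _ (ltW rt) ts) (step_in _ (lexx r) lt_rs) (@step_out _ b r s s);
  last by rewrite ltxx andbF.
by rewrite subrr normr0 mul0r add0r sub0r normrN ger0_norm // addr0.
Qed.

Lemma Vnu_step_ge_left_right u t : 0 <= u -> u < r -> r < t -> t < s ->
  ((b * (phi u + phi t))%:E <= Vnu phi (step b r s))%E.
Proof.
move=> u_ge0 ur rt ts.
pose xi k := match k with 0%N => u | 1%N => r | 2%N => t | _ => s end.
have adm : admissible (step b r s) 3 xi.
  apply: admissible_step => //=; last exact: ltW.
  by case=> [|[|[|]]] //= _; lra.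
apply: le_trans (Vnu_ge_sum adm).
rewrite big_ltn // big_ltn // big_ltn // big_geq //= lee_fin.
rewrite (step_in _ (ltW rt) ts) (step_in _ (lexx r) lt_rs) (@step_out _ b r s s);
  last by rewrite ltxx andbF.
rewrite (@step_out _ b r s u); last by rewrite negb_and -ltNge ur.
by rewrite subr0 subrr normr0 mul0r add0r sub0r normrN ger0_norm // addr0 mulrDr.
Qed.

Lemma Vnu_step_ge : ((b * co_perimeter phi r s)%:E <= Vnu phi (step b r s))%E.
Proof.
apply/lee_subgt0Pr => e e_gt0; rewrite -EFinB.
have b1_gt0 : 0 < b + 1 := ltr_wpDl b_ge0 ltr01.
set d := e / (b + 1) / 2.
have d_gt0 : 0 < d by rewrite !divr_gt0.
have bd_le : b * (d + d) <= e.
  rewrite /d -splitr mulrCA ger_pMr // ler_pdivrMr; lra.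
have [t /andP[rt ts] phit] := phi_approx_left r_ge0 lt_rs d_gt0.
rewrite /co_perimeter; case: ifPn => [r_gt0|_].
  have [u /andP[u_gt0 ur] phiu] := phi_approx_left (lexx 0) r_gt0 d_gt0.
  apply: le_trans (Vnu_step_ge_left_right (ltW u_gt0) ur rt ts).
  by rewrite lee_fin; have := b_ge0; nra.
apply: le_trans (Vnu_step_ge_right rt ts).
by rewrite lee_fin add0r; have := b_ge0; nra.
Qed.

End Step.

End Interval.

End Density.

Theorem lemma2p4 (R : realType) (phi I J K L : R -> R) :
  (forall x, 0 <= x -> 0 <= phi x) ->
  {within Rplus, continuous phi} ->
  (forall x, 0 <= x -> 0 <= I x) ->
  (forall x, 0 <= x -> 0 <= J x) ->
  (forall x, 0 <= x -> 0 <= K x) ->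
  (forall x, 0 <= x -> 0 <= L x) ->
  (forall a b, 0 <= a -> 0 <= b -> I (a * b) <= b * J a + K (a * L b)) ->
  lower_isoperimetric phi J ->
  nondecreasing_on_Rplus K -> concave_on_Rplus K ->
  concave_on_Rplus L ->
  forall b r s : R, 0 <= b -> 0 <= r -> r < s ->
  ((I (fine (\int[@lebesgue_measure R]_(x in Rplus) (step b r s x * phi x)%:E)))%:E <=
     Kext K (\int[@lebesgue_measure R]_(x in Rplus) (L (step b r s x) * phi x)%:E)
     + Vnu phi (step b r s))%E.
Proof.
move=> phi_ge0 phi_cont _ _ _ L_ge0 IJK J_iso K_mono _ _ b r s b_ge0 r_ge0 lt_rs.
have A_sub := co_sub_Rplus r_ge0 : `[r, s[ `<=` Rplus.
have /fineK nuA := nu_co_fin_num phi_ge0 phi_cont r_ge0 lt_rs.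
set a := fine _ in nuA.
have a_ge0 : 0 <= a by rewrite -lee_fin nuA nu_ge0.
rewrite integral_step_phi // -nuA -EFinM /= mulrC.
apply: (@le_trans _ _ ((K (a * L b))%:E + (b * J a)%:E)%E).
  by rewrite -EFinD lee_fin addrC IJK.
apply: leeD.
  apply: Kext_ge => //; first by rewrite mulr_ge0 ?L_ge0.
  by rewrite mulrC EFinM nuA integral_comp_step_ge.
apply: (le_trans _ (Vnu_step_ge phi_cont r_ge0 lt_rs b_ge0)).
rewrite lee_fin ler_wpM2l // -lee_fin.
apply: (le_trans _ (nu_plus_co_le phi_ge0 phi_cont r_ge0 lt_rs)).
by apply: J_iso; [exact: measurable_itv | exact: A_sub | rewrite -nuA ltry].
Qed.
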